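(* Let $G^1=\langle V^1,s^1_1,s^1_2,\mathsf{null}^1,\mathsf{root}^1\rangle$ and $G^2=\langle V^2,s^2_1,s^2_2,\mathsf{null}^2,\mathsf{root}^2\rangle$ be graphs and let $G^1\times G^2$ be their Cartesian product. Then for every graph $G$: $G\to G^1\times G^2$ if and only if $G\to G^1$ and $G\to G^2$.
   Context: A graph is a tuple $\langle V,s_1,s_2,\mathsf{null},\mathsf{root}\rangle$ with $V$ finite, $\mathsf{root}\neq\mathsf{null}$ in $V$, $s_1,s_2\subseteq V\times V$, and $\langle\mathsf{null},x\rangle\in s_i$ iff $x=\mathsf{null}$. A homomorphism $h:G\to G'$ is a map on nodes with $\langle x,y\rangle\in s_i\Rightarrow\langle h(x),h(y)\rangle\in s_i'$, $h(x)=\mathsf{root}'$ iff $x=\mathsf{root}$, $h(x)=\mathsf{null}'$ iff $x=\mathsf{null}$; $G\to G'$ means one exists. The Cartesian product $G^0=G^1\times G^2=\langle V^0,s^0_1,s^0_2,\mathsf{null}^0,\mathsf{root}^0\rangle$ has $\mathsf{null}^0=\langle\mathsf{null}^1,\mathsf{null}^2\rangle$, $\mathsf{root}^0=\langle\mathsf{root}^1,\mathsf{root}^2\rangle$, $V^0=\{\mathsf{null}^0,\mathsf{root}^0\}\cup(V^1\setminus\{\mathsf{null}^1,\mathsf{root}^1\})\times(V^2\setminus\{\mathsf{null}^2,\mathsf{root}^2\})$, and for $i\in\{1,2\}$, $s^0_i=\{\langle\langle x^1,x^2\rangle,\langle y^1,y^2\rangle\rangle : \langle x^1,x^2\rangle,\langle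 y^1,y^2\rangle\in V^0,\ \langle x^1,y^1\rangle\in s^1_i,\ \langle x^2,y^2\rangle\in s^2_i\}$. *)

From mathcomp Require Import all_boot.
Unset Printing Implicit Defensive.

Record pgraph := PGraph {
  vert : finType;
  s1 : rel vert;
  s2 : rel vert;
  null : vert;
  root : vert }.

Definition is_graph (G : pgraph) : Prop :=
  root G <> null G /\
  (forall x, @s1 G (null G) x <-> x = null G) /\
  (forall x, @s2 G (null G) x <-> x = null G).

Definition is_hom (G G' : pgraph) (h : vert G -> vert G') : Prop :=
  (forall x y, @s1 G x y -> @s1 G' (h x) (h y)) /\
  (forall x y, @s2 G x y -> @s2 G' (h x) (h y)) /\
  (forall x, h x = root G' <-> x = root G) /\
  (forall x, h x = null G' <-> x = null G).

Definition hom_exists (G G' : pgraph) : Prop := exists h, is_hom G G' h.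

Section Product.
Variables G1 G2 : pgraph.

Definition prod_pred (p : vert G1 * vert G2) : bool :=
  [|| p == (null G1, null G2), p == (root G1, root G2) |
      [&& p.1 != null G1, p.1 != root G1, p.2 != null G2 & p.2 != root G2]].

Definition prod_vert : finType := {p : vert G1 * vert G2 | prod_pred p}.

Lemma prod_null_proof : prod_pred (null G1, null G2).
Proof. by rewrite /prod_pred eqxx. Qed.

Lemma prod_root_proof : prod_pred (root G1, root G2).
Proof. by rewrite /prod_pred eqxx orbT. Qed.

Definition prod_null : prod_vert := exist prod_pred _ prod_null_proof.
Definition prod_root : prod_vert := exist prod_pred _ prod_root_proof.

Definition prod_s1 : rel prod_vert := fun x y =>
  @s1 G1 (val x).1 (val y).1 && @s1 G2 (val x).2 (val y).2.
Definition prod_s2 : rel prod_vert := fun x y =>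
  @s2 G1 (val x).1 (val y).1 && @s2 G2 (val x).2 (val y).2.

Definition prod_graph : pgraph :=
  @PGraph prod_vert prod_s1 prod_s2 prod_null prod_root.
End Product.

From Pilot Require Import Defs.
From mathcomp Require Import all_boot.

Set Implicit Arguments.
Unset Strict Implicit.
Unset Printing Implicit Defensive.

(* A homomorphism into G1 x G2 amounts to a pair of homomorphisms into the
   factors: compose with the projections one way, pair the components the
   other.  The projections reflect root and null because a product vertex with
   one coordinate a root (null) must be the root (null) of the product. *)

Lemma is_hom_comp (G H K : pgraph) (f : vert G -> vert H) (g : vert H -> vert K) :
  is_hom G H f -> is_hom H K g -> is_hom G K (g \o f).
Proof.
move=> [f1 [f2 [fr fn]]] [g1 [g2 [gr gn]]].
split; [|split; [|split]] => [x y /f1/g1 | x y /f2/g2 | x | x] //=.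
- exact: iff_trans (gr _) (fr _).
- exact: iff_trans (gn _) (fn _).
Qed.

Lemma hom_exists_trans (G H K : pgraph) :
  hom_exists G H -> hom_exists H K -> hom_exists G K.
Proof. by move=> [f hf] [g hg]; exists (g \o f); apply: is_hom_comp hf hg. Qed.

Section ProductHom.
Variables G1 G2 : pgraph.
Local Notation P := (prod_graph G1 G2).

Lemma prod_vertP (x : vert P) :
  [\/ x = prod_null G1 G2, x = prod_root G1 G2 |
      [/\ (val x).1 != null G1, (val x).1 != Defs.root G1,
          (val x).2 != null G2 & (val x).2 != Defs.root G2]].
Proof.
case: x => p; rewrite /prod_pred => px.
case/or3P: (px) => [/eqP Ep | /eqP Ep | /and4P[? ? ? ?]]; last by constructor 3.
- by constructor 1; apply: val_inj.
- by constructor 2; apply: val_inj.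
Qed.

Section Projections.
Hypothesis root_neq_null1 : Defs.root G1 <> null G1.
Hypothesis root_neq_null2 : Defs.root G2 <> null G2.

Lemma prod_null_neq_root : prod_null G1 G2 <> prod_root G1 G2.
Proof. by move/(congr1 (fun x => (val x).1)) => /esym. Qed.

Lemma is_hom_prod_fst : is_hom P G1 (fun x => (val x).1).
Proof.
split; [by move=> x y /andP[] | split; [by move=> x y /andP[] | ]].
split=> x; case: (prod_vertP x) => [-> | -> | [/eqP n1 /eqP r1 _ _]] /=; split=> // E;
  exfalso; by [apply: root_neq_null1; rewrite E | apply: prod_null_neq_root; rewrite E
              | rewrite E in r1 n1].
Qed.

Lemma is_hom_prod_snd : is_hom P G2 (fun x => (val x).2).
Proof.
split; [by move=> x y /andP[] | split; [by move=> x y /andP[] | ]].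
split=> x; case: (prod_vertP x) => [-> | -> | [_ _ /eqP n2 /eqP r2]] /=; split=> // E;
  exfalso; by [apply: root_neq_null2; rewrite E | apply: prod_null_neq_root; rewrite E
              | rewrite E in r2 n2].
Qed.

End Projections.

Section Pairing.
Variables (G : pgraph) (h1 : vert G -> vert G1) (h2 : vert G -> vert G2).
Hypotheses (hom1 : is_hom G G1 h1) (hom2 : is_hom G G2 h2).

Lemma prod_pred_pair x : prod_pred G1 G2 (h1 x, h2 x).
Proof.
case: hom1 hom2 => [_ [_ [r1 n1]]] [_ [_ [r2 n2]]].
rewrite /prod_pred /= !xpair_eqE.
have [->|xn] := eqVneq x (null G).
  by rewrite (proj2 (n1 _)) // (proj2 (n2 _)) // !eqxx.
have [->|xr] := eqVneq x (Defs.root G).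
  by rewrite (proj2 (r1 _)) // (proj2 (r2 _)) // !eqxx orbT.
apply/or3P; constructor 3; apply/and4P; split; apply/eqP.
- by move/n1/eqP; rewrite (negPf xn).
- by move/r1/eqP; rewrite (negPf xr).
- by move/n2/eqP; rewrite (negPf xn).
- by move/r2/eqP; rewrite (negPf xr).
Qed.

Definition prod_pair (x : vert G) : vert P := exist (prod_pred G1 G2) _ (prod_pred_pair x).

Lemma is_hom_prod_pair : is_hom G P prod_pair.
Proof.
case: hom1 hom2 => [a1 [b1 [r1 n1]]] [a2 [b2 [r2 n2]]].
split; [|split; [|split]] => [x y e | x y e | x | x].
- by apply/andP; split; [apply: a1 | apply: a2].
- by apply/andP; split; [apply: b1 | apply: b2].
- split=> [/(congr1 val) [] /r1 // | ->].
  by apply: val_inj; rewrite /= (proj2 (r1 _)) // (proj2 (r2 _)).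
- split=> [/(congr1 val) [] /n1 // | ->].
  by apply: val_inj; rewrite /= (proj2 (n1 _)) // (proj2 (n2 _)).
Qed.

End Pairing.
End ProductHom.

Theorem proposition25 (G1 G2 : pgraph) (hG1 : is_graph G1) (hG2 : is_graph G2)
  (G : pgraph) (hG : is_graph G) :
  hom_exists G (prod_graph G1 G2) <-> hom_exists G G1 /\ hom_exists G G2.
Proof.
have [root_neq_null1 _] := hG1; have [root_neq_null2 _] := hG2.
split=> [hGP | [[h1 hom1] [h2 hom2]]].
- split; apply: hom_exists_trans hGP _.
  + by exists (fun x => (val x).1); apply: is_hom_prod_fst.
  + by exists (fun x => (val x).2); apply: is_hom_prod_snd.
- by exists (prod_pair hom1 hom2); apply: is_hom_prod_pair.
Qed.
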